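(* Let $\underline c<\overline c$ and $\underline s<\overline s$ be real numbers and write $\phi(c,s)=\sqrt{c^2+s^2}$. Suppose $$\phi(\overline c,\overline s)+\phi(\underline c,\underline s)-\phi(\overline c,\underline s)-\phi(\underline c,\overline s)>0.$$ Define $\eta^3=\frac{\phi(\overline c,\overline s)-\phi(\underline c,\overline s)}{\overline c-\underline c}$, $\delta^3=\frac{\phi(\underline c,\overline s)-\phi(\underline c,\underline s)}{\overline s-\underline s}$, $\nu^3=\phi(\underline c,\underline s)-\eta^3\underline c-\delta^3\underline s$, and $\eta^4=\frac{\phi(\overline c,\underline s)-\phi(\underline c,\underline s)}{\overline c-\underline c}$, $\delta^4=\frac{\phi(\overline c,\overline s)-\phi(\overline c,\underline s)}{\overline s-\underline s}$, $\nu^4=\phi(\overline c,\overline s)-\eta^4\overline c-\delta^4\overline s$. Then for $n=3,4$ and all $(c,s)\in[\underline c,\overline c]\times[\underline s,\overline s]$ we have $\nu^n+\eta^n c+\delta^n s\ge \sqrt{c^2+s^2}$. *)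

From Stdlib Require Import Reals.
Open Scope R_scope.

Definition phi (c s : R) : R := sqrt (c ^ 2 + s ^ 2).

Definition eta3 (cl cu sl su : R) : R := (phi cu su - phi cl su) / (cu - cl).
Definition delta3 (cl cu sl su : R) : R := (phi cl su - phi cl sl) / (su - sl).
Definition nu3 (cl cu sl su : R) : R :=
  phi cl sl - eta3 cl cu sl su * cl - delta3 cl cu sl su * sl.

Definition eta4 (cl cu sl su : R) : R := (phi cu sl - phi cl sl) / (cu - cl).
Definition delta4 (cl cu sl su : R) : R := (phi cu su - phi cu sl) / (su - sl).
Definition nu4 (cl cu sl su : R) : R :=
  phi cu su - eta4 cl cu sl su * cu - delta4 cl cu sl su * su.

(* The function phi is the Euclidean norm of R^2, hence convex and positively
   homogeneous. Writing a point of the rectangle as the bilinear combination of the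
   four corners with weights (1-a)(1-b), a(1-b), (1-a)b, ab, convexity bounds phi
   by the bilinear interpolant of its corner values. Each plane exceeds that
   interpolant by a(1-b) resp. (1-a)b times the positive corner gap
   phi(cu,su) + phi(cl,sl) - phi(cu,sl) - phi(cl,su). *)
From Stdlib Require Import Reals Lra Psatz.
Open Scope R_scope.

Lemma phi_ge0 x y : 0 <= phi x y.
Proof. apply sqrt_pos. Qed.

Lemma phi_sqr x y : phi x y * phi x y = x ^ 2 + y ^ 2.
Proof. apply sqrt_sqrt; nra. Qed.

Lemma phi_cauchy_schwarz x1 y1 x2 y2 : x1 * x2 + y1 * y2 <= phi x1 y1 * phi x2 y2.
Proof.
  unfold phi; rewrite <- sqrt_mult_alt by nra.
  apply (Rle_trans _ (Rabs (x1 * x2 + y1 * y2))); [apply Rle_abs |].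
  rewrite <- sqrt_Rsqr_abs; apply sqrt_le_1_alt; unfold Rsqr.
  assert (Hlagrange : 0 <= (x1 * y2 - x2 * y1) ^ 2) by apply pow2_ge_0.
  nra.
Qed.

Lemma phi_triangle x1 y1 x2 y2 : phi (x1 + x2) (y1 + y2) <= phi x1 y1 + phi x2 y2.
Proof.
  pose proof (phi_cauchy_schwarz x1 y1 x2 y2).
  pose proof (phi_sqr x1 y1); pose proof (phi_sqr x2 y2).
  pose proof (phi_ge0 x1 y1); pose proof (phi_ge0 x2 y2).
  unfold phi at 1; rewrite <- (sqrt_pow2 (phi x1 y1 + phi x2 y2)) by lra.
  apply sqrt_le_1_alt; nra.
Qed.

Lemma phi_scale w x y : 0 <= w -> phi (w * x) (w * y) = w * phi x y.
Proof.
  intro Hw; unfold phi.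
  replace ((w * x) ^ 2 + (w * y) ^ 2) with (w * w * (x ^ 2 + y ^ 2)) by ring.
  rewrite sqrt_mult_alt, sqrt_square by nra; reflexivity.
Qed.

Definition bilin (p00 p10 p01 p11 a b : R) : R :=
  (1 - a) * (1 - b) * p00 + a * (1 - b) * p10 + (1 - a) * b * p01 + a * b * p11.

Lemma phi_le_bilin cl cu sl su a b :
  0 <= a <= 1 -> 0 <= b <= 1 ->
  phi (bilin cl cu cl cu a b) (bilin sl sl su su a b)
  <= bilin (phi cl sl) (phi cu sl) (phi cl su) (phi cu su) a b.
Proof.
  intros Ha Hb; unfold bilin.
  rewrite <- (phi_scale ((1 - a) * (1 - b))), <- (phi_scale (a * (1 - b))),
    <- (phi_scale ((1 - a) * b)), <- (phi_scale (a * b)) by nra.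
  repeat (eapply Rle_trans; [apply phi_triangle | apply Rplus_le_compat_r]).
  apply Rle_refl.
Qed.

Lemma segment_coord {l u x : R} : l < u -> l <= x <= u ->
  exists a, 0 <= a <= 1 /\ x = l + a * (u - l).
Proof.
  intros Hlu Hx; exists ((x - l) / (u - l)).
  assert (Hscaled : (x - l) / (u - l) * (u - l) = x - l) by (field; lra).
  split; [split | lra]; nra.
Qed.

Section Planes.

Context {cl cu sl su : R} (a b : R).
Hypotheses (Hc : cl < cu) (Hs : sl < su).

Let gap := phi cu su + phi cl sl - phi cu sl - phi cl su.
Let interp := bilin (phi cl sl) (phi cu sl) (phi cl su) (phi cu su) a b.

Lemma plane3_bilin :
  nu3 cl cu sl su + eta3 cl cu sl su * (cl + a * (cu - cl))
    + delta3 cl cu sl su * (sl + b * (su - sl))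
  = interp + a * (1 - b) * gap.
Proof. unfold nu3, eta3, delta3, interp, gap, bilin; field; lra. Qed.

Lemma plane4_bilin :
  nu4 cl cu sl su + eta4 cl cu sl su * (cl + a * (cu - cl))
    + delta4 cl cu sl su * (sl + b * (su - sl))
  = interp + (1 - a) * b * gap.
Proof. unfold nu4, eta4, delta4, interp, gap, bilin; field; lra. Qed.

End Planes.

Theorem proposition5 (cl cu sl su : R) :
  cl < cu -> sl < su ->
  phi cu su + phi cl sl - phi cu sl - phi cl su > 0 ->
  forall c s : R, cl <= c <= cu -> sl <= s <= su ->
    nu3 cl cu sl su + eta3 cl cu sl su * c + delta3 cl cu sl su * s
      >= sqrt (c ^ 2 + s ^ 2) /\
    nu4 cl cu sl su + eta4 cl cu sl su * c + delta4 cl cu sl su * s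
      >= sqrt (c ^ 2 + s ^ 2).
Proof.
  intros Hc Hs Hgap c s Hcr Hsr.
  destruct (segment_coord Hc Hcr) as [a [Ha ->]].
  destruct (segment_coord Hs Hsr) as [b [Hb ->]].
  pose proof (phi_le_bilin cl cu sl su a b Ha Hb) as Hconvex.
  replace (bilin cl cu cl cu a b) with (cl + a * (cu - cl)) in Hconvex
    by (unfold bilin; ring).
  replace (bilin sl sl su su a b) with (sl + b * (su - sl)) in Hconvex
    by (unfold bilin; ring).
  fold (phi (cl + a * (cu - cl)) (sl + b * (su - sl))).
  rewrite (plane3_bilin a b Hc Hs), (plane4_bilin a b Hc Hs).
  assert (0 <= a * (1 - b)) by nra.
  assert (0 <= (1 - a) * b) by nra.
  split; nra.
Qed.
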